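(* Let $k$ be a field of characteristic $0$ and let $F(X,Y), G(X,Y)\in k[X,Y]$. Assume there exist $A(X,Y), B(X,Y)\in k[X,Y]$ such that $$A(F(X,Y),G(X,Y))=X,\quad B(F(X,Y),G(X,Y))=Y,\quad F(A(X,Y),B(X,Y))=X,\quad G(A(X,Y),B(X,Y))=Y.$$ Then there exist $\mathcal{X}(t), \mathcal{Y}(t)\in k[X,Y][t]$ such that $$F(\mathcal{X}(t),\mathcal{Y}(t))=tX+(1-t)F(X,Y),\qquad G(\mathcal{X}(t),\mathcal{Y}(t))=tY+(1-t)G(X,Y),$$ with $\mathcal{X}(0)=X$, $\mathcal{Y}(0)=Y$, $\mathcal{X}(1)=A(X,Y)$ and $\mathcal{Y}(1)=B(X,Y)$. Moreover, the degree in $t$ of $\mathcal{X}(t)$ and of $\mathcal{Y}(t)$ is at most $\max\{\deg F(X,Y), \deg G(X,Y)\}$.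
   Context: For a polynomial $F\in k[X,Y]$, $\deg(F)$ denotes the total degree (maximum total degree of the monomials occurring in $F$). *)

From mathcomp Require Import all_boot all_order all_algebra.
From mathcomp Require Import multinomials.mpoly.
Set Implicit Arguments. Unset Strict Implicit. Unset Printing Implicit Defensive.
Import GRing.Theory.
Local Open Scope ring_scope.

(* k[X,Y] is {mpoly k[2]}, X = 'X_0, Y = 'X_1; k[X,Y][t] is {poly {mpoly k[2]}}. *)

(* total degree of a bivariate polynomial (msize p = 1 + total degree, 0 for p = 0) *)
Definition tdeg (k : fieldType) (p : {mpoly k[2]}) : nat := (msize p).-1.

Definition subst2 (k : fieldType) (P U V : {mpoly k[2]}) : {mpoly k[2]} :=
  P \mPo [tuple U; V].

(* substitution P(U(t),V(t)) for P in k[X,Y], U(t) V(t) in k[X,Y][t] *)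
Definition subst2t (k : fieldType) (P : {mpoly k[2]}) (U V : {poly {mpoly k[2]}})
  : {poly {mpoly k[2]}} :=
  mmap (fun c : k => (c%:MP)%:P) (fun i : 'I_2 => if i == ord0 then U else V) P.

From mathcomp Require Import all_boot all_order all_algebra.
From mathcomp Require Import multinomials.mpoly.
From mathcomp Require Import zify ring.
Import GRing.Theory.
Local Open Scope ring_scope.

(* Put Phi = (F, G), Psi = (A, B) and X(t) = A(l(t)), Y(t) = B(l(t)) along the
   segment l(t) = t (X, Y) + (1 - t) (F, G); the identities then follow from
   Phi o Psi = id. For the degree bound work over the fraction field K of
   k[X,Y], where l(t) = c + e t is a line, and let P = Psi(l) = (X(t), Y(t)).
   Fix a coordinate i and let o be the other one. Modulo P_i a polynomial in P
   only sees its restriction to the axis x_i = 0, so Phi_j(P) = c_j + e_j t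
   gives e_j t = a_j(P_o) mod P_i, where a_j = Phi_j(axis) - c_j has degree at
   most M = max(deg F, deg G). If some e_j is nonzero, t is thus a polynomial
   in P_o modulo P_i, and P_o is annihilated by h = e_1 a_0 - e_0 a_1; hence
   K[t]/(P_i) is spanned by the powers of P_o below deg h, and
   deg P_i <= deg h <= M, unless h = 0, in which case the axis is mapped onto
   the line and P_i = 0. *)

Lemma dvdp_sub_comp_poly {K : fieldType} (p : {poly K}) {q u v : {poly K}} :
  q %| u - v -> q %| (p \Po u) - (p \Po v).
Proof.
move=> quv; elim/poly_ind: p => [|p a IHp]; first by rewrite !comp_poly0 subrr dvdp0.
have -> : ((p * 'X + a%:P) \Po u) - ((p * 'X + a%:P) \Po v)
          = ((p \Po u) - (p \Po v)) * u + (p \Po v) * (u - v).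
  by rewrite !comp_poly_MXaddC; ring.
by apply: dvdp_add; [exact: dvdp_mulr | exact: dvdp_mull].
Qed.

Lemma size_mul_leq_add {R : nzRingType} a b (p q : {poly R}) :
  (size p <= a.+1)%N -> (size q <= b.+1)%N -> (size (p * q)%R <= (a + b).+1)%N.
Proof. by move=> sp sq; rewrite (leq_trans (size_polyMleq _ _)) //; lia. Qed.

Section CompDvdp.
Context {K : fieldType} {q h w tau : {poly K}}.
Hypotheses (qhw : q %| h \Po w) (qXw : q %| 'X - (tau \Po w)).

Lemma comp_dvdp_eq0 (s : {poly K}) : (size s < size q)%N -> h %| s \Po tau -> s = 0.
Proof.
move=> lt_sq /dvdpP[r def_s_tau].
have qs : q %| s.
  move: qXw => /(dvdp_sub_comp_poly s); rewrite comp_polyXr comp_polyA def_s_tau.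
  by rewrite comp_polyM (dvdp_subl _ (dvdp_mull _ qhw)).
by apply/eqP; apply: contraTT lt_sq => /dvdp_leq/(_ qs); rewrite leqNgt.
Qed.

Lemma leq_size_dvdp_comp : h != 0 -> (size q <= size h)%N.
Proof.
(* The [size h] residues [tau ^+ j %% h] live in [{poly_(size h).-1 K}]. *)
move=> h_neq0; rewrite leqNgt; apply/negP => lt_hq.
pose n := (size h).-1; have size_h : size h = n.+1 := polySpred h_neq0.
pose r : n.+1.-tuple {poly_n K} := [tuple npolyp n (tau ^+ j %% h) | j < n.+1].
have r_free : free r.
  apply/freeP => a sum_ar0 j.
  pose s := \poly_(l < n.+1) a (inord l).
  have h_s : h %| s \Po tau.
    apply/modp_eq0P; rewrite /s poly_def linear_sum (big_morph _ (modpD h) (mod0p h)).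
    rewrite -[RHS](congr1 val sum_ar0) raddf_sum; apply: eq_bigr => l _.
    rewrite !linearZ rmorphXn /= comp_polyX modpZl inord_val; congr (_ *: _).
    rewrite (nth_map ord0) ?size_enum_ord // nth_ord_enum npolypK //.
    by rewrite -ltnS -[X in (_ < X)%N]size_h ltn_modp.
  have lt_sq : (size s < size q)%N by rewrite (leq_ltn_trans (size_poly _ _)) -?size_h.
  have s0 := comp_dvdp_eq0 _ lt_sq h_s.
  by have := coef_poly n.+1 (a \o inord) j; rewrite -/s s0 coef0 ltn_ord /= inord_val.
by have := dimvS (subvf <<r>>); rewrite dim_polyn (eqP r_free) size_tuple ltnn.
Qed.
End CompDvdp.

Section MmapFacts.
Context {n : nat}.

Lemma eq_mmap {R S : nzRingType} (f1 f2 : R -> S) (h1 h2 : 'I_n -> S) p :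
  f1 =1 f2 -> h1 =1 h2 -> mmap f1 h1 p = mmap f2 h2 p.
Proof. by move=> ef eh; apply: eq_bigr => m _; rewrite ef (mmap1_eq _ eh). Qed.

Lemma mmapXU {R : nzRingType} {S : comNzRingType} (f : {rmorphism R -> S}) h (i : 'I_n) :
  mmap f h 'X_i = h i.
Proof. by rewrite mmapX mmap1U. Qed.

Lemma rmorph_mmap {R S T : nzRingType} (f : R -> S) (h : 'I_n -> S)
    (phi : {rmorphism S -> T}) p :
  phi (mmap f h p) = mmap (phi \o f) (phi \o h) p.
Proof.
rewrite rmorph_sum; apply: eq_bigr => m _; rewrite rmorphM rmorph_prod.
by congr (_ * _); apply: eq_bigr => i _; rewrite rmorphXn.
Qed.

Lemma mmap_comp_mpoly {k} {R : nzRingType} {S : comNzRingType} (f : {rmorphism R -> S})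
    (h : 'I_k -> S) p (lq : n.-tuple {mpoly R[k]}) :
  mmap f h (p \mPo lq) = mmap f (fun i => mmap f h (tnth lq i)) p.
Proof.
rewrite comp_mpolyE raddf_sum /= [RHS]/mmap; apply: eq_bigr => m _.
rewrite mmapZ rmorph_prod; congr (_ * _); apply: eq_bigr => i _.
by rewrite rmorphXn.
Qed.

Lemma dvdp_mmapB {R : nzRingType} {K : fieldType} (f : R -> {poly K})
    (g g' : 'I_n -> {poly K}) q p :
  (forall i, q %| g i - g' i) -> q %| mmap f g p - mmap f g' p.
Proof.
move=> dvd_gg'; rewrite -sumrB.
apply: (big_ind (dvdp q)) => [|x y|m _]; [exact: dvdp0 | exact: dvdp_add |].
rewrite -mulrBr dvdp_mull //.
apply: (big_ind2 (fun x y => q %| x - y)) => [|x x' y y' dvd_x dvd_y|i _].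
- by rewrite subrr dvdp0.
- have -> : x * y - x' * y' = x * (y - y') + (x - x') * y' by ring.
  by apply: dvdp_add; [exact: dvdp_mull | exact: dvdp_mulr].
- by rewrite subrXX dvdp_mulr.
Qed.

Lemma size_mmap1_leq {R : nzRingType} {h : 'I_n -> {poly R}} {d} m :
  (forall i, (size (h i) <= d.+1)%N) -> (size (mmap1 h m) <= (mdeg m * d).+1)%N.
Proof.
move=> size_h; rewrite /mmap1 mdegE big_distrl /=.
elim/big_rec2: _ => [|i a r _ size_r]; first by rewrite size_poly1.
apply: size_mul_leq_add size_r; rewrite (leq_trans (size_poly_exp_leq _ _)) //.
by rewrite ltnS mulnC leq_mul2l; have := size_h i; lia.
Qed.

Lemma size_mmap_polyC_leq {R S : nzRingType} (f : R -> S)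
    {h : 'I_n -> {poly S}} {d} p :
  (forall i, (size (h i) <= d.+1)%N) ->
  (size (mmap (polyC \o f) h p) <= ((msize p).-1 * d).+1)%N.
Proof.
move=> size_h; rewrite /mmap big_seq.
apply: (big_ind (fun r : {poly S} => size r <= ((msize p).-1 * d).+1)%N).
- by rewrite size_poly0.
- by move=> r r' sr sr'; rewrite (leq_trans (size_polyD _ _)) // geq_max sr sr'.
move=> m /msize_mdeg_lt lt_m_p; rewrite /= mul_polyC (leq_trans (size_scale_leq _ _)) //.
rewrite (leq_trans (size_mmap1_leq m size_h)) // ltnS leq_mul2r; apply/orP; right.
lia.
Qed.

End MmapFacts.

Lemma ord2_cases (j : 'I_2) : j = 0 \/ j = 1.
Proof. by case: j => [[|[|//]] lt_j]; [left | right]; apply: val_inj. Qed.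

Section AffineLinePreimage.
Context {k K : fieldType} (f : {rmorphism k -> K}).
Context {Phi Psi : 2.-tuple {mpoly k[2]}}.
Hypothesis Psi_Phi : forall j, tnth Psi j \mPo Phi = 'X_j.
Hypothesis Phi_Psi : forall j, tnth Phi j \mPo Psi = 'X_j.
Context {M : nat}.
Hypothesis tdeg_Phi : forall j, (tdeg (tnth Phi j) <= M)%N.
Variables (c e : 'I_2 -> K).

Local Notation ev := (mmap (polyC \o f)).

Let line j : {poly K} := (c j)%:P + e j *: 'X.
Let P j := ev line (tnth Psi j).

Lemma ev_Phi_P j : ev P (tnth Phi j) = line j.
Proof. by rewrite -(mmapXU (polyC \o f) line j) -Phi_Psi mmap_comp_mpoly. Qed.

Variable i : 'I_2.
Let o := lift i ord0.

Lemma other_index j : j != i -> j = o.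
Proof. by case: (unliftP i j) => [j' -> | ->]; rewrite ?eqxx // (ord1 j'). Qed.

Let axis j : {poly K} := if j == i then 0 else 'X.
Let a j := ev axis (tnth Phi j) - (c j)%:P.

Lemma ev_on_axis p : ev (fun j => if j == i then 0 else P j) p = ev axis p \Po P o.
Proof.
rewrite (rmorph_mmap _ _ (comp_poly (P o))); apply: eq_mmap => [x | j] /=.
  by rewrite comp_polyC.
by rewrite /axis; case: eqP => [_ | /eqP /other_index ->]; rewrite ?comp_poly0 ?comp_polyX.
Qed.

Lemma dvdp_line_axis j : P i %| e j *: 'X - (a j \Po P o).
Proof.
have -> : e j *: 'X - (a j \Po P o)
          = ev P (tnth Phi j) - ev (fun m => if m == i then 0 else P m) (tnth Phi j).
  by rewrite ev_Phi_P ev_on_axis /a comp_polyB comp_polyC /line; ring.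
apply: dvdp_mmapB => m; case: eqP => [-> | _]; first by rewrite subr0 dvdpp.
by rewrite subrr dvdp0.
Qed.

Lemma size_axis_leq j : (size (a j) <= M.+1)%N.
Proof.
rewrite (leq_trans (size_polyD _ _)) // geq_max size_polyN size_polyC.
rewrite (leq_trans (leq_b1 _)) // andbT.
have size_axis m : (size (axis m) <= 2)%N.
  by rewrite /axis; case: eqP; rewrite ?size_poly0 ?size_polyX.
rewrite (leq_trans (size_mmap_polyC_leq f (tnth Phi j) size_axis)) //.
by rewrite muln1 ltnS; apply: tdeg_Phi.
Qed.

Lemma size_P_constant_line : (forall j, e j = 0) -> (size (P i) <= 1)%N.
Proof.
move=> e0; have size_line j : (size (line j) <= 1)%N.
  by rewrite /line e0 scale0r addr0 size_polyC leq_b1.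
by rewrite (leq_trans (size_mmap_polyC_leq f (tnth Psi i) size_line)) // muln0.
Qed.

Let tau j := (e j)^-1 *: a j.

Lemma dvdp_X_tau {j} : e j != 0 -> P i %| 'X - (tau j \Po P o).
Proof.
move=> ej_neq0; have -> : 'X - (tau j \Po P o) = (e j)^-1 *: (e j *: 'X - (a j \Po P o)).
  by rewrite /tau comp_polyZ scalerBr scalerA mulVf // scale1r.
by rewrite -mul_polyC dvdp_mull // dvdp_line_axis.
Qed.

Let h := e 1 *: a 0 - e 0 *: a 1.

Lemma dvdp_h_P : P i %| h \Po P o.
Proof.
have -> : h \Po P o = (e 0)%:P * (e 1 *: 'X - (a 1 \Po P o))
                      - (e 1)%:P * (e 0 *: 'X - (a 0 \Po P o)).
  by rewrite /h comp_polyB !comp_polyZ -!mul_polyC; ring.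
by apply: dvdp_sub; apply: dvdp_mull; apply: dvdp_line_axis.
Qed.

Lemma size_h_leq : (size h <= M.+1)%N.
Proof.
rewrite (leq_trans (size_polyD _ _)) // geq_max size_polyN.
by rewrite !(leq_trans (size_scale_leq _ _)) ?size_axis_leq.
Qed.

Lemma P_eq0_of_h_eq0 {j1} : e j1 != 0 -> h = 0 -> P i = 0.
Proof.
move=> ej1_neq0 /subr0_eq h0.
have cross j j' : e j *: a j' = e j' *: a j.
  by case: (ord2_cases j) (ord2_cases j') => -> [] ->.
have e_tau j : e j *: tau j1 = a j.
  by rewrite /tau scalerA mulrC -scalerA cross scalerA mulVf // scale1r.
have P_tau m : P m \Po tau j1 = axis m.
  rewrite (rmorph_mmap _ _ (comp_poly (tau j1))) -[RHS](mmapXU (polyC \o f) axis).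
  rewrite -Psi_Phi mmap_comp_mpoly; apply: eq_mmap => [x | j] /=.
    by rewrite comp_polyC.
  by rewrite /line comp_polyD comp_polyC comp_polyZ comp_polyX e_tau /a addrC subrK.
have tau_gt1 : (1 < size (tau j1))%N.
  rewrite ltnNge; apply/negP => /size1_polyC tau_const.
  have := P_tau o; rewrite tau_const comp_polyCr /axis eq_sym (negbTE (neq_lift _ _)).
  move/(congr1 (fun p : {poly K} => size p)); rewrite /= size_polyX size_polyC.
  by case: (_ != 0).
by apply/eqP; rewrite -(comp_poly_eq0 _ tau_gt1) P_tau /axis eqxx.
Qed.

Lemma size_P_leq : (size (P i) <= M.+1)%N.
Proof.
have [e0 | /forallPn[j1 ej1_neq0]] := boolP [forall j, e j == 0].
  by rewrite (leq_trans (size_P_constant_line (fun j => eqP (forallP e0 j)))).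
have [h0 | h_neq0] := eqVneq h 0; first by rewrite (P_eq0_of_h_eq0 ej1_neq0 h0) size_poly0.
exact: leq_trans (leq_size_dvdp_comp dvdp_h_P (dvdp_X_tau ej1_neq0) h_neq0) size_h_leq.
Qed.

End AffineLinePreimage.

Section Subst2.
Context {k : fieldType}.
Implicit Types (p a b : {mpoly k[2]}) (U V : {poly {mpoly k[2]}}).

Definition segment (Phi : 2.-tuple {mpoly k[2]}) (j : 'I_2) : {poly {mpoly k[2]}} :=
  'X * ('X_j)%:P + (1 - 'X) * (tnth Phi j)%:P.

Lemma subst2tE p U V :
  subst2t p U V = mmap (polyC \o @mpolyC 2 k) (tnth [tuple U; V]) p.
Proof. by apply: eq_mmap => // j; case: (ord2_cases j) => ->. Qed.

Lemma subst2t_comp p a b U V :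
  subst2t p (subst2t a U V) (subst2t b U V) = subst2t (subst2 p a b) U V.
Proof.
rewrite !subst2tE mmap_comp_mpoly; apply: eq_mmap => // j.
by case: (ord2_cases j) => ->.
Qed.

Lemma subst2t_X0 U V : subst2t 'X_0 U V = U.
Proof. by rewrite subst2tE mmapXU. Qed.

Lemma subst2t_X1 U V : subst2t 'X_1 U V = V.
Proof. by rewrite subst2tE mmapXU. Qed.

Lemma segmentE Phi j : segment Phi j = (tnth Phi j)%:P + ('X_j - tnth Phi j) *: 'X.
Proof. by rewrite /segment -mul_polyC polyCB; ring. Qed.

Lemma horner_segment0 Phi j : (segment Phi j).[0] = tnth Phi j.
Proof. by rewrite segmentE hornerD hornerC hornerZ hornerX mulr0 addr0. Qed.

Lemma horner_segment1 Phi j : (segment Phi j).[1] = 'X_j.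
Proof. by rewrite segmentE hornerD hornerC hornerZ hornerX mulr1 addrC subrK. Qed.

Lemma horner_subst2t_segment Phi p x :
  (subst2t p (segment Phi 0) (segment Phi 1)).[x]
  = p \mPo [tuple (segment Phi j).[x] | j < 2].
Proof.
rewrite subst2tE -horner_evalE (rmorph_mmap _ _ (horner_eval x)).
apply: eq_mmap => [c | j] /=; first exact: hornerC.
by rewrite tnth_mktuple; case: (ord2_cases j) => ->.
Qed.

Lemma segment_at0 Phi : [tuple (segment Phi j).[0] | j < 2] = Phi.
Proof. by apply: eq_from_tnth => j; rewrite tnth_mktuple horner_segment0. Qed.

Lemma segment_at1 Phi : [tuple (segment Phi j).[1] | j < 2] = [tuple 'X_j | j < 2].
Proof. by apply: eq_from_tnth => j; rewrite !tnth_mktuple horner_segment1. Qed.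

Lemma size_segment_preimage {Phi Psi : 2.-tuple {mpoly k[2]}} {M} :
    (forall j, tnth Psi j \mPo Phi = 'X_j) -> (forall j, tnth Phi j \mPo Psi = 'X_j) ->
    (forall j, (tdeg (tnth Phi j) <= M)%N) ->
  forall i, ((size (mmap (polyC \o @mpolyC 2 k) (segment Phi) (tnth Psi i))).-1 <= M)%N.
Proof.
move=> Psi_Phi Phi_Psi tdeg_Phi i.
pose c j := tofrac (tnth Phi j); pose e j := tofrac ('X_j - tnth Phi j).
have map_segment :
    map_poly (@tofrac _) (mmap (polyC \o @mpolyC 2 k) (segment Phi) (tnth Psi i))
    = mmap (polyC \o (@tofrac _ \o @mpolyC 2 k)) (fun j => (c j)%:P + e j *: 'X)
           (tnth Psi i).
  rewrite (rmorph_mmap _ _ (map_poly (@tofrac _))); apply: eq_mmap => [x | j] /=.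
    by rewrite map_polyC.
  by rewrite segmentE rmorphD /= map_polyC map_polyZ map_polyX.
have := size_P_leq (@tofrac {mpoly k[2]} \o @mpolyC 2 k) Psi_Phi Phi_Psi tdeg_Phi c e i.
rewrite -map_segment size_map_inj_poly ?rmorph0 -?subn1 ?leq_subLR //.
by move=> x y /eqP; rewrite tofrac_eq => /eqP.
Qed.

End Subst2.

Theorem lemma3p1 (k : fieldType) (chark : [pchar k] =i pred0)
  (F G A B : {mpoly k[2]}) :
  subst2 A F G = 'X_0 -> subst2 B F G = 'X_1 ->
  subst2 F A B = 'X_0 -> subst2 G A B = 'X_1 ->
  exists Xt Yt : {poly {mpoly k[2]}},
    [/\ subst2t F Xt Yt = 'X * ('X_0)%:P + (1 - 'X) * F%:P,
        subst2t G Xt Yt = 'X * ('X_1)%:P + (1 - 'X) * G%:P,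
        Xt.[0] = 'X_0 /\ Yt.[0] = 'X_1,
        Xt.[1] = A /\ Yt.[1] = B &
        ((size Xt).-1 <= maxn (tdeg F) (tdeg G))%N /\
        ((size Yt).-1 <= maxn (tdeg F) (tdeg G))%N].
Proof.
move=> AFG BFG FAB GAB.
have Psi_Phi j : tnth [tuple A; B] j \mPo [tuple F; G] = 'X_j by case: (ord2_cases j) => ->.
have Phi_Psi j : tnth [tuple F; G] j \mPo [tuple A; B] = 'X_j by case: (ord2_cases j) => ->.
have tdeg_FG j : (tdeg (tnth [tuple F; G] j) <= maxn (tdeg F) (tdeg G))%N.
  by case: (ord2_cases j) => ->; rewrite ?leq_maxl ?leq_maxr.
pose L := segment [tuple F; G].
have segmentsE p : subst2t p (L 0) (L 1) = mmap (polyC \o @mpolyC 2 k) L p.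
  by apply: eq_mmap => // j; case: (ord2_cases j) => ->.
have size_AB := size_segment_preimage Psi_Phi Phi_Psi tdeg_FG.
exists (subst2t A (L 0) (L 1)), (subst2t B (L 0) (L 1)); split.
- by rewrite subst2t_comp FAB subst2t_X0.
- by rewrite subst2t_comp GAB subst2t_X1.
- by split; rewrite horner_subst2t_segment segment_at0; [exact: AFG | exact: BFG].
- by split; rewrite horner_subst2t_segment segment_at1 comp_mpoly_id.
- by split; rewrite segmentsE; [exact: (size_AB 0) | exact: (size_AB 1)].
Qed.
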